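(* Let $N,M\ge 0$ be integers, let $A_0,\dots,A_N$ and $B_0,\dots,B_M$ be rational numbers with $B_0\neq 0$, and consider the Diophantine equation $$\sum_{i=0}^N A_i\big(Z_i^5+{Z'_{i+1}}^5\big)=\sum_{i=0}^M B_i\big(W_i^3+{W'_{i+1}}^3\big)\qquad(\ast\ast)$$ in the unknowns $Z_i,Z'_{i+1}$ $(0\le i\le N)$, $W_i,W'_{i+1}$ $(0\le i\le M)$. Fix rational numbers $x_0,\dots,x_N$ and $y_1,\dots,y_M$, and let $C$ be the quartic curve $$v^2=\Big(\frac{\sum_{i=0}^N A_i}{3B_0}\Big)t^4+\Big(\frac{10\sum_{i=0}^N A_ix_i^2-\sum_{i=0}^M B_i}{3B_0}\Big)t^2+\frac{5\sum_{i=0}^N A_ix_i^4-3\sum_{i=1}^M B_iy_i^2}{3B_0}.$$ Then for every rational point $(t,v)$ of $C$, setting $y_0=v$, the tuple $Z_i=t+x_i$, $Z'_{i+1}=t-x_i$ $(0\le i\le N)$, $W_i=t+y_i$, $W'_{i+1}=t-y_i$ $(0\le i\le M)$ is a rational solution of $(\ast\ast)$. Moreover, if $(\ast\ast)$ has a rational solution then, multiplying all $Z$-variables by $\mu^3$ and all $W$-variables by $\mu^5$ for a suitable integer $\mu$, one obtains an integer solution; hence if $C$ has infinitely many rational points (e.g. it has a rational point and is birational to an elliptic curve of positive rank), then $(\ast\ast)$ has infinitely many integer solutions. *)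

From HB Require Import structures.
From mathcomp Require Import all_boot all_order all_algebra.
Set Implicit Arguments. Unset Strict Implicit. Unset Printing Implicit Defensive.
Import Order.TTheory GRing.Theory Num.Theory.
Local Open Scope ring_scope.

(* The equation (**):
     sum_{i=0}^N A_i (Z_i^5 + Z'_{i+1}^5) = sum_{i=0}^M B_i (W_i^3 + W'_{i+1}^3).
   Convention: Z' i (i : 'I_(N.+1)) stands for Z'_{i+1}; likewise W' i for W'_{i+1}. *)
Definition eqnSol (N M : nat) (A : 'I_N.+1 -> rat) (B : 'I_M.+1 -> rat)
  (Z Z' : 'I_N.+1 -> rat) (W W' : 'I_M.+1 -> rat) : Prop :=
  \sum_(i < N.+1) A i * (Z i ^+ 5 + Z' i ^+ 5)
  = \sum_(i < M.+1) B i * (W i ^+ 3 + W' i ^+ 3).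

Definition intSol (N M : nat) (A : 'I_N.+1 -> rat) (B : 'I_M.+1 -> rat)
  (z z' : 'I_N.+1 -> int) (w w' : 'I_M.+1 -> int) : Prop :=
  eqnSol A B (fun i => (z i)%:~R) (fun i => (z' i)%:~R)
             (fun i => (w i)%:~R) (fun i => (w' i)%:~R).

(* The quartic curve C.  y : 'I_M.+1 -> rat; only y_1..y_M are used
   (the value y ord0 is irrelevant; y_0 is set to v). *)
Definition onC (N M : nat) (A : 'I_N.+1 -> rat) (B : 'I_M.+1 -> rat)
  (x : 'I_N.+1 -> rat) (y : 'I_M.+1 -> rat) (t v : rat) : Prop :=
  v ^+ 2 =
    (\sum_(i < N.+1) A i) / (3 * B ord0) * t ^+ 4
  + (10 * (\sum_(i < N.+1) A i * x i ^+ 2) - \sum_(i < M.+1) B i) / (3 * B ord0) * t ^+ 2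
  + (5 * (\sum_(i < N.+1) A i * x i ^+ 4)
       - 3 * (\sum_(i < M.+1 | i != ord0) B i * y i ^+ 2)) / (3 * B ord0).

Definition yv (M : nat) (y : 'I_M.+1 -> rat) (v : rat) : 'I_M.+1 -> rat :=
  fun i => if i == ord0 then v else y i.

Definition intTuple (N M : nat) : Type :=
  (('I_N.+1 -> int) * ('I_N.+1 -> int) * ('I_M.+1 -> int) * ('I_M.+1 -> int))%type.

From HB Require Import structures.
From mathcomp Require Import all_boot all_order all_algebra.
From mathcomp Require Import ring lra.
Set Implicit Arguments. Unset Strict Implicit. Unset Printing Implicit Defensive.
Import Order.TTheory GRing.Theory Num.Theory.
Local Open Scope ring_scope.

(* Substituting Z = t +- x_i and W = t +- y_i cancels the odd powers of x_i and
   y_i: (t + a)^5 + (t - a)^5 = 2t^5 + 20t^3a^2 + 10ta^4 and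
   (t + b)^3 + (t - b)^3 = 2t^3 + 6tb^2.  So the equation becomes t times an
   identity in t^2 and v^2, which after division by 6 B_0 is the equation of C.
   Every monomial of the equation has weighted degree 15 when the Z's have
   weight 3 and the W's weight 5, so scaling them by mu^3 and mu^5, for mu a
   common denominator, turns rational solutions into integer ones.  Distinct
   points of C give distinct integer solutions: the scaled tuple determines
   mu^3 t, mu^5 t and mu^5 v, hence mu when t <> 0; when t = 0 it determines
   mu^10 v^2, and v^2 is fixed by C. *)

Lemma half_sum_diff_eq (R : realFieldType) (a c b d u w : R) :
  a * (b + u) = c * (d + w) -> a * (b - u) = c * (d - w) ->
  a * b = c * d /\ a * u = c * w.
Proof. by move=> eD eB; split; lra. Qed.

Lemma pos_scale_inj (R : numDomainType) (m1 m2 a : R) (n : nat) :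
  0 < m1 -> 0 < m2 -> (0 < n)%N -> a != 0 ->
  m1 ^+ n * a = m2 ^+ n * a -> m1 = m2.
Proof.
move=> m1_gt0 m2_gt0 n_gt0 a_neq0 /(mulIf a_neq0)/eqP.
by rewrite eqrXn2 ?ltW // => /eqP.
Qed.

Lemma weighted_scale_inj (R : numFieldType) (m1 m2 t1 t2 v1 v2 : R) :
  0 < m1 -> 0 < m2 -> (t1 = t2 -> v1 ^+ 2 = v2 ^+ 2) ->
  m1 ^+ 3 * t1 = m2 ^+ 3 * t2 -> m1 ^+ 5 * t1 = m2 ^+ 5 * t2 ->
  m1 ^+ 5 * v1 = m2 ^+ 5 * v2 -> t1 = t2 /\ v1 = v2.
Proof.
move=> m1_gt0 m2_gt0 sqrv e3t e5t e5v.
have m2X_neq0 k : m2 ^+ k != 0 := expf_neq0 k (lt0r_neq0 m2_gt0).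
have scale0 k (a b : R) : m1 ^+ k * a = m2 ^+ k * b -> a = 0 -> b = 0.
  by move=> + a0; rewrite a0 mulr0 => /esym/eqP; rewrite mulf_eq0 (negbTE (m2X_neq0 k)) => /eqP.
have [/andP[/eqP t10 /eqP v10] | tv_neq0] := boolP ((t1 == 0) && (v1 == 0)).
  by rewrite t10 v10 (scale0 _ _ _ e3t t10) (scale0 _ _ _ e5v v10).
suff m12 : m1 = m2.
  by subst m2; split; [exact: (mulfI (m2X_neq0 3%N) e3t) | exact: (mulfI (m2X_neq0 5%N) e5v)].
have [t10 | t1_neq0] := eqVneq t1 0.
  have v1_neq0 : v1 != 0 by move: tv_neq0; rewrite t10 eqxx.
  have sqrv' : v1 ^+ 2 = v2 ^+ 2 by apply: sqrv; rewrite t10 (scale0 _ _ _ e3t t10).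
  apply: (pos_scale_inj (n := 10%N) m1_gt0 m2_gt0 _ (expf_neq0 2%N v1_neq0)) => //.
  by rewrite [in RHS]sqrv' !(exprM _ 5 2) -!exprMn e5v.
have a_neq0 := mulf_neq0 (expf_neq0 3%N (lt0r_neq0 m1_gt0)) t1_neq0.
apply: (pos_scale_inj (n := 2%N) m1_gt0 m2_gt0 _ a_neq0) => //.
by rewrite [in RHS]e3t; transitivity (m1 ^+ 5 * t1); [ring | rewrite e5t; ring].
Qed.

Definition denom_prod (s : seq rat) : int := \prod_(q <- s) denq q.

Lemma denom_prod_gt0 (s : seq rat) : 0 < denom_prod s.
Proof. by apply: prodr_gt0 => q _; exact: denq_gt0. Qed.

Lemma denq_dvd_denom_prod (s : seq rat) (q : rat) :
  q \in s -> (denq q %| denom_prod s)%Z.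
Proof. by move=> qs; rewrite /denom_prod (big_rem q) //= dvdz_mulr. Qed.

Lemma denq_dvd_mul_int (q : rat) (m : int) : (denq q %| m)%Z -> m%:~R * q \is a Num.int.
Proof.
by move/divzK => <-; rewrite intrM -mulrA [_ * q]mulrC -numqE -intrM intr_int.
Qed.

Definition int_scale (m : int) (k : nat) (q : rat) : int := Num.floor (m%:~R ^+ k * q).

Lemma int_scaleK (m : int) (k : nat) (q : rat) :
  (denq q %| m)%Z -> (0 < k)%N -> (int_scale m k q)%:~R = m%:~R ^+ k * q.
Proof.
move=> dvd_qm; case: k => // k _; rewrite /int_scale floorK // exprSr -mulrA.
by rewrite rpredM ?rpredX ?intr_int ?denq_dvd_mul_int.
Qed.

Section Equation.

Variables (N M : nat) (A : 'I_N.+1 -> rat) (B : 'I_M.+1 -> rat).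

Lemma eqnSol_weighted_scale (m : rat) (Z Z' : 'I_N.+1 -> rat) (W W' : 'I_M.+1 -> rat) :
  eqnSol A B Z Z' W W' ->
  eqnSol A B (fun i => m ^+ 3 * Z i) (fun i => m ^+ 3 * Z' i)
             (fun i => m ^+ 5 * W i) (fun i => m ^+ 5 * W' i).
Proof.
rewrite /eqnSol => sol.
transitivity (m ^+ 15 * \sum_(i < N.+1) A i * (Z i ^+ 5 + Z' i ^+ 5)).
  by rewrite mulr_sumr; apply: eq_bigr => i _; ring.
by rewrite sol mulr_sumr; apply: eq_bigr => i _; ring.
Qed.

Definition clear_denom (Z Z' : 'I_N.+1 -> rat) (W W' : 'I_M.+1 -> rat) : int :=
  denom_prod (codom Z ++ codom Z' ++ codom W ++ codom W').

Definition weighted_int_tuple (Z Z' : 'I_N.+1 -> rat) (W W' : 'I_M.+1 -> rat) :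
    intTuple N M :=
  let m := clear_denom Z Z' W W' in
  (fun i => int_scale m 3 (Z i), fun i => int_scale m 3 (Z' i),
   fun i => int_scale m 5 (W i), fun i => int_scale m 5 (W' i)).

Lemma weighted_int_tupleE (Z Z' : 'I_N.+1 -> rat) (W W' : 'I_M.+1 -> rat) :
  let m : rat := (clear_denom Z Z' W W')%:~R in
  let p := weighted_int_tuple Z Z' W W' in
  [/\ forall i, (p.1.1.1 i)%:~R = m ^+ 3 * Z i,
      forall i, (p.1.1.2 i)%:~R = m ^+ 3 * Z' i,
      forall i, (p.1.2 i)%:~R = m ^+ 5 * W i &
      forall i, (p.2 i)%:~R = m ^+ 5 * W' i].
Proof.
by split=> i; apply: int_scaleK => //; apply: denq_dvd_denom_prod;
  rewrite !mem_cat codom_f ?orbT.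
Qed.

Lemma eqnSol_weighted_int_tuple (Z Z' : 'I_N.+1 -> rat) (W W' : 'I_M.+1 -> rat) :
  eqnSol A B Z Z' W W' ->
  let p := weighted_int_tuple Z Z' W W' in intSol A B p.1.1.1 p.1.1.2 p.1.2 p.2.
Proof.
move=> /(eqnSol_weighted_scale (clear_denom Z Z' W W')%:~R) sol /=.
have [eZ eZ' eW eW'] := weighted_int_tupleE Z Z' W W'.
rewrite /intSol /eqnSol.
under eq_bigr do rewrite eZ eZ'.
by under [RHS]eq_bigr do rewrite eW eW'.
Qed.

Variables (x : 'I_N.+1 -> rat) (y : 'I_M.+1 -> rat).

Lemma onC_eqnSol (t v : rat) : B ord0 != 0 -> onC A B x y t v ->
  eqnSol A B (fun i => t + x i) (fun i => t - x i)
             (fun i => t + yv y v i) (fun i => t - yv y v i).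
Proof.
rewrite /onC /eqnSol => B0_neq0.
set SA := \sum_(i < N.+1) A i; set SA2 := \sum_(i < N.+1) A i * x i ^+ 2.
set SA4 := \sum_(i < N.+1) A i * x i ^+ 4; set SB := \sum_(i < M.+1) B i.
set SBy := \sum_(i < M.+1 | i != ord0) B i * y i ^+ 2.
move=> onCtv.
have -> : \sum_(i < N.+1) A i * ((t + x i) ^+ 5 + (t - x i) ^+ 5)
    = 2 * t ^+ 5 * SA + 20 * t ^+ 3 * SA2 + 10 * t * SA4.
  by rewrite /SA /SA2 /SA4 !mulr_sumr -!big_split /=; apply: eq_bigr => i _; ring.
have -> : \sum_(i < M.+1) B i * ((t + yv y v i) ^+ 3 + (t - yv y v i) ^+ 3)
    = 2 * t ^+ 3 * SB + 6 * t * \sum_(i < M.+1) B i * yv y v i ^+ 2.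
  by rewrite /SB !mulr_sumr -!big_split /=; apply: eq_bigr => i _; ring.
have -> : \sum_(i < M.+1) B i * yv y v i ^+ 2 = B ord0 * v ^+ 2 + SBy.
  rewrite (bigD1 ord0) //= /yv eqxx; congr (_ + _).
  by apply: eq_bigr => i /negbTE ->.
by clearbody SA SA2 SA4 SB SBy; rewrite onCtv; field.
Qed.

Definition curve_int_tuple (t v : rat) : intTuple N M :=
  weighted_int_tuple (fun i => t + x i) (fun i => t - x i)
                     (fun i => t + yv y v i) (fun i => t - yv y v i).

Lemma curve_int_tuple_inj (t1 v1 t2 v2 : rat) :
  onC A B x y t1 v1 -> onC A B x y t2 v2 ->
  curve_int_tuple t1 v1 = curve_int_tuple t2 v2 -> t1 = t2 /\ v1 = v2.
Proof.
move=> onC1 onC2; rewrite /curve_int_tuple => e12.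
have [eZ1 eZ'1 eW1 eW'1] := weighted_int_tupleE (fun i => t1 + x i) (fun i => t1 - x i)
  (fun i => t1 + yv y v1 i) (fun i => t1 - yv y v1 i).
have [eZ2 eZ'2 eW2 eW'2] := weighted_int_tupleE (fun i => t2 + x i) (fun i => t2 - x i)
  (fun i => t2 + yv y v2 i) (fun i => t2 - yv y v2 i).
rewrite -e12 in eZ2 eZ'2 eW2 eW'2.
have eZ := etrans (esym (eZ1 ord0)) (eZ2 ord0).
have eZ' := etrans (esym (eZ'1 ord0)) (eZ'2 ord0).
have eW := etrans (esym (eW1 ord0)) (eW2 ord0).
have eW' := etrans (esym (eW'1 ord0)) (eW'2 ord0).
have yv0 v : yv y v ord0 = v by rewrite /yv eqxx.
rewrite !yv0 in eW eW'.
have [e3t _] := half_sum_diff_eq eZ eZ'.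
have [e5t e5v] := half_sum_diff_eq eW eW'.
apply: weighted_scale_inj e3t e5t e5v; rewrite ?ltr0z ?denom_prod_gt0 //.
by move=> t12; rewrite onC1 onC2 t12.
Qed.

End Equation.

Theorem mainTheorem2 (N M : nat) (A : 'I_N.+1 -> rat) (B : 'I_M.+1 -> rat)
  (hB0 : B ord0 != 0) (x : 'I_N.+1 -> rat) (y : 'I_M.+1 -> rat) :
  (forall t v : rat, onC A B x y t v ->
     eqnSol A B (fun i => t + x i) (fun i => t - x i)
                (fun i => t + yv y v i) (fun i => t - yv y v i))
  /\
  (forall (Z Z' : 'I_N.+1 -> rat) (W W' : 'I_M.+1 -> rat),
     eqnSol A B Z Z' W W' ->
     exists mu : int, mu != 0 /\
       exists (z z' : 'I_N.+1 -> int) (w w' : 'I_M.+1 -> int),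
         (forall i, (z i)%:~R = (mu%:~R) ^+ 3 * Z i) /\
         (forall i, (z' i)%:~R = (mu%:~R) ^+ 3 * Z' i) /\
         (forall i, (w i)%:~R = (mu%:~R) ^+ 5 * W i) /\
         (forall i, (w' i)%:~R = (mu%:~R) ^+ 5 * W' i) /\
         intSol A B z z' w w')
  /\
  ((exists g : nat -> rat * rat, injective g /\
      forall n, onC A B x y (g n).1 (g n).2) ->
   exists f : nat -> intTuple N M, injective f /\
      forall n, intSol A B (f n).1.1.1 (f n).1.1.2 (f n).1.2 (f n).2).
Proof.
split; first by move=> t v; exact: onC_eqnSol.
split.
  move=> Z Z' W W' sol; exists (clear_denom Z Z' W W').
  split; first by rewrite gt_eqF ?denom_prod_gt0.
  have [eZ eZ' eW eW'] := weighted_int_tupleE Z Z' W W'.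
  do 4 eexists; do 4 (split; first by []).
  exact: eqnSol_weighted_int_tuple.
case=> g [g_inj onC_g].
exists (fun n => curve_int_tuple x y (g n).1 (g n).2); split.
  move=> n1 n2 /(curve_int_tuple_inj (onC_g n1) (onC_g n2)) [e1 e2].
  by apply: g_inj; rewrite [g n1]surjective_pairing [g n2]surjective_pairing e1 e2.
by move=> n; apply: eqnSol_weighted_int_tuple; exact: onC_eqnSol.
Qed.
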